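(* Let $G$ be a finite simple graph of order $n$ without isolated vertices, with $\gamma_t(G)=2$ and maximum degree $\Delta(G)\le n-2$. Then $$\tau(G)\le \binom{n}{2}-\left\lceil \frac{n}{2}\right\rceil,$$ and this bound is sharp (attained with equality by some such graph).
   Context: A set $D \subseteq V(G)$ is a total dominating set of $G$ if every vertex of $G$ has a neighbor in $D$. $\gamma_t(G)$ is the minimum cardinality of a total dominating set; a minimum one is a $\gamma_t(G)$-set, and $\tau(G)$ is the number of $\gamma_t(G)$-sets. *)

From mathcomp Require Import all_boot all_order.
Set Implicit Arguments. Unset Strict Implicit. Unset Printing Implicit Defensive.

Definition simple_graph (T : finType) (e : rel T) : Prop :=
  symmetric e /\ irreflexive e.

Definition nbhd (T : finType) (e : rel T) (v : T) : {set T} := [set u | e v u].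
Definition deg (T : finType) (e : rel T) (v : T) : nat := #|nbhd e v|.
Definition max_deg (T : finType) (e : rel T) : nat := \max_(v : T) deg e v.

Definition no_isolated (T : finType) (e : rel T) : Prop :=
  forall v : T, exists u : T, e v u.

Definition total_dominating (T : finType) (e : rel T) (D : {set T}) : bool :=
  [forall v : T, [exists u in D, e v u]].

(* gamma_t(G): minimum cardinality of a total dominating set
   (defaults to #|T| when none exists, which cannot happen without
   isolated vertices) *)
Definition gamma_t (T : finType) (e : rel T) : nat :=
  \big[minn/#|T|]_(D : {set T} | total_dominating e D) #|D|.

Definition tau (T : finType) (e : rel T) : nat :=
  #|[set D : {set T} | total_dominating e D & #|D| == gamma_t e]|.

From mathcomp Require Import all_boot all_order.
From mathcomp Require Import zify.
Import Order.TTheory.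

Set Implicit Arguments.
Unset Strict Implicit.
Unset Printing Implicit Defensive.

(* When gamma_t = 2 the gamma_t-sets are exactly the totally dominating
   2-subsets, so it suffices to exhibit ceil(n/2) 2-subsets that are not
   totally dominating.  Since Delta <= n - 2, every vertex v has a
   non-neighbour w <> v, and v has no neighbour in {v, w}; these non-dominating
   pairs cover all n vertices, so there are at least ceil(n/2) of them.  The
   4-cycle attains the bound: n = 4, and its gamma_t-sets are its 4 edges. *)

Lemma uphalf_le_card_pair_cover (T : finType) (P : {set {set T}}) :
  {in P, forall A : {set T}, #|A| <= 2} -> cover P = [set: T] -> uphalf #|T| <= #|P|.
Proof.
move=> card_le2 coverT; rewrite leq_uphalf_double -muln2 -cardsT -coverT.
apply: leq_trans (leq_of_leqif (leq_card_cover P)) _.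
by rewrite -sum_nat_const; apply: leq_sum.
Qed.

Section TotalDomination.
Variables (T : finType) (e : rel T).

Lemma gamma_t_le_card D : total_dominating e D -> gamma_t e <= #|D|.
Proof.
move=> tdD; rewrite /gamma_t -minEnat.
exact: (bigmin_le_cond _ (fun A : {set T} => #|A|) tdD).
Qed.

Lemma nonneighbour_exists v : deg e v < #|T|.-1 -> exists2 w, w != v & ~~ e v w.
Proof.
move=> deg_small.
case: (pickP [pred w | (w != v) && ~~ e v w]) => [w /andP[]|all_adj].
  by exists w.
have coverT : [set: T] \subset v |: nbhd e v.
  apply/subsetP => w _; rewrite !inE.
  by have /= := all_adj w; case: eqP => // _ /negbFE.
have := subset_leq_card coverT; rewrite cardsT cardsU1 -/(deg e v); lia.
Qed.

Definition nondominating_pairs : {set {set T}} :=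
  [set A : {set T} | #|A| == 2 & ~~ total_dominating e A].

Lemma tau_gamma_t2 :
  gamma_t e = 2 -> tau e = 'C(#|T|, 2) - #|nondominating_pairs|.
Proof.
move=> gamma2; rewrite -card_draws -(cardsID [set A | total_dominating e A]).
have -> : nondominating_pairs = [set A : {set T} | #|A| == 2] :\: [set A | total_dominating e A].
  by apply/setP => A; rewrite !inE andbC.
by rewrite addnK /tau gamma2; apply: eq_card => A; rewrite !inE andbC.
Qed.

Hypothesis e_irr : irreflexive e.

Lemma total_dominating_card_ge2 (v : T) D : total_dominating e D -> 2 <= #|D|.
Proof.
move=> /forallP tdD.
have /existsP[u /andP[uD _]] := tdD v.
have /existsP[w /andP[wD euw]] := tdD u.
have uw_sub : [set u; w] \subset D.
  by apply/subsetP => x /set2P[] ->.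
apply: leq_trans (subset_leq_card uw_sub); rewrite cards2.
by case: eqP euw => [<-|]; rewrite ?e_irr.
Qed.

Lemma gamma_t_ge2 (v : T) : 2 <= #|T| -> 2 <= gamma_t e.
Proof.
move=> cardT; rewrite /gamma_t -minEnat.
apply/(bigmin_geP _ _ _ (fun A : {set T} => #|A|)); split=> // D.
exact: total_dominating_card_ge2.
Qed.

Lemma pair_not_total_dominating v w :
  ~~ e v w -> ~~ total_dominating e [set v; w].
Proof.
move=> not_evw; apply/forallP => /(_ v) /existsP[u /andP[/set2P[] -> evu]].
  by rewrite e_irr in evu.
by rewrite evu in not_evw.
Qed.

Lemma cover_nondominating_pairs :
  no_isolated e -> max_deg e <= #|T| - 2 -> cover nondominating_pairs = [set: T].
Proof.
move=> no_iso max_deg_small; apply/setP => v; rewrite inE.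
have deg_pos : 0 < deg e v.
  by have [u evu] := no_iso v; apply/card_gt0P; exists u; rewrite inE.
have deg_le_max : deg e v <= max_deg e by apply: leq_bigmax.
have deg_small : deg e v < #|T|.-1 by lia.
have [w w_neq_v not_evw] := nonneighbour_exists deg_small.
apply/bigcupP; exists [set v; w]; last exact: set21.
by rewrite inE cards2 (eq_sym v) w_neq_v pair_not_total_dominating.
Qed.

Lemma tau_le_binom_sub_uphalf :
  no_isolated e -> gamma_t e = 2 -> max_deg e <= #|T| - 2 ->
  tau e <= 'C(#|T|, 2) - uphalf #|T|.
Proof.
move=> no_iso gamma2 max_deg_small; rewrite tau_gamma_t2 // leq_sub2l //.
apply: uphalf_le_card_pair_cover; last exact: cover_nondominating_pairs.
by move=> A; rewrite inE => /andP[/eqP->].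
Qed.

End TotalDomination.

(* The 4-cycle as K_{2,2}: a vertex is a pair (side, index), and edges join
   opposite sides. *)
Definition cycle4 : rel (bool * bool) := fun x y => x.1 != y.1.

Lemma cycle4_simple : simple_graph cycle4.
Proof. by split=> [x y|x]; rewrite /cycle4 ?eqxx // eq_sym. Qed.

Lemma cycle4_no_isolated : no_isolated cycle4.
Proof. by move=> [a b]; exists (~~ a, b); case: a. Qed.

Lemma card_cycle4_vertices : #|{: bool * bool}| = 4.
Proof. by rewrite card_prod card_bool. Qed.

Lemma cycle4_max_deg : max_deg cycle4 <= 2.
Proof.
apply/bigmax_leqP => -[a b] _.
have nbhd_sub : nbhd cycle4 (a, b) \subset [set (~~ a, false); (~~ a, true)].
  by apply/subsetP => -[c d]; rewrite !inE !xpair_eqE; case: a; case: c; case: d.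
by apply: leq_trans (subset_leq_card nbhd_sub) _; rewrite cards2 ltnS leq_b1.
Qed.

Definition cycle4_edge (x : bool * bool) : {set bool * bool} :=
  [set (false, x.1); (true, x.2)].

Lemma cycle4_edge_total_dominating x : total_dominating cycle4 (cycle4_edge x).
Proof.
apply/forallP => -[[] c]; apply/existsP; [exists (false, x.1)|exists (true, x.2)].
  by rewrite !inE eqxx.
by rewrite !inE eqxx orbT.
Qed.

Lemma cycle4_edge_inj : injective cycle4_edge.
Proof.
move=> [a b] [a' b'] edge_eq.
have /set2P[[->]|//] : (false, a) \in cycle4_edge (a', b') by rewrite -edge_eq set21.
by have /set2P[//|[->]] : (true, b) \in cycle4_edge (a', b') by rewrite -edge_eq set22.
Qed.

Lemma cycle4_gamma_t : gamma_t cycle4 = 2.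
Proof.
apply/anti_leq; rewrite (gamma_t_ge2 (proj2 cycle4_simple) (false, false))
  ?card_cycle4_vertices ?andbT //.
apply: leq_trans (gamma_t_le_card (cycle4_edge_total_dominating (false, false))) _.
by rewrite cards2.
Qed.

Lemma cycle4_tau_ge4 : 4 <= tau cycle4.
Proof.
rewrite -card_cycle4_vertices -cardsT -(card_imset _ cycle4_edge_inj) subset_leq_card //.
apply/subsetP => _ /imsetP[x _ ->].
by rewrite inE cycle4_edge_total_dominating cycle4_gamma_t cards2.
Qed.

Theorem proposition2p16 :
  (forall (T : finType) (e : rel T),
     simple_graph e -> no_isolated e -> gamma_t e = 2 ->
     max_deg e <= #|T| - 2 ->
     tau e <= 'C(#|T|, 2) - uphalf #|T|)
  /\
  (exists (T : finType) (e : rel T),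
     [/\ simple_graph e, no_isolated e, gamma_t e = 2,
         max_deg e <= #|T| - 2 &
         tau e = 'C(#|T|, 2) - uphalf #|T|]).
Proof.
split=> [T e [_ e_irr]|]; first exact: tau_le_binom_sub_uphalf.
have max_deg_small : max_deg cycle4 <= #|{: bool * bool}| - 2.
  by rewrite card_cycle4_vertices; exact: cycle4_max_deg.
have tau_le := tau_le_binom_sub_uphalf (proj2 cycle4_simple)
  cycle4_no_isolated cycle4_gamma_t max_deg_small.
exists _, cycle4; split=> //.
- exact: cycle4_simple.
- exact: cycle4_no_isolated.
- exact: cycle4_gamma_t.
by apply/anti_leq; rewrite tau_le card_cycle4_vertices cycle4_tau_ge4.
Qed.
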